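(* Let $G=(V,E)$ be a connected simple graph with $|V|\ge2$. Then $$\varepsilon(G)\le\frac12\sum_{v\in V}\varepsilon(G\setminus v),$$ where $G\setminus v$ is the subgraph induced on $V\setminus\{v\}$.
   Context: For an undirected simple graph $G=(V,E)$, $\varepsilon(G)$ denotes the maximum, over all acyclic orientations of $E$, of the number of linear extensions of the partial order induced on $V$ (where $u<v$ iff there is a directed path from $u$ to $v$; a linear extension of a poset on an $n$-element set is an order-preserving bijection onto $[n]$). *)

From mathcomp Require Import all_boot.
Set Implicit Arguments. Unset Strict Implicit. Unset Printing Implicit Defensive.

Section Graphs.
Variable T : finType.

Definition simple_graph (e : rel T) : Prop := symmetric e /\ irreflexive e.

Definition connected_graph (e : rel T) : Prop := forall u v : T, connect e u v.

Definition arcrel (A : {set T * T}) : rel T := fun u v => (u, v) \in A.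

Definition is_orientation (e : rel T) (S : {set T}) (A : {set T * T}) : bool :=
  [forall u, forall v,
     (((u, v) \in A) ==> [&& e u v, u \in S & v \in S]) &&
     ([&& e u v, u \in S & v \in S] ==> (((u, v) \in A) (+) ((v, u) \in A)))].

Definition is_acyclic (A : {set T * T}) : bool :=
  [forall u, forall v, ((u, v) \in A) ==> ~~ connect (arcrel A) v u].

Definition acyclic_orientation e S A := is_orientation e S A && is_acyclic A.

Definition ao_lt (A : {set T * T}) (u v : T) : bool :=
  (u != v) && connect (arcrel A) u v.

(* Linear extensions of the poset (S, ao_lt A): order-preserving bijections
   S -> {1,...,#|S|}, encoded as functions T -> nat-bounded ordinals that are 0
   outside S. *)
Definition is_linext (S : {set T}) (A : {set T * T}) (f : {ffun T -> 'I_#|T|.+1}) : bool :=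
  [&& [forall x, (x \notin S) ==> (nat_of_ord (f x) == 0)],
      [forall x in S, (1 <= f x) && (f x <= #|S|)],
      [forall x in S, forall y in S, (f x == f y) ==> (x == y)] &
      [forall u in S, forall v in S, ao_lt A u v ==> (f u < f v)]].

Definition num_linext (S : {set T}) (A : {set T * T}) : nat :=
  #|[set f | is_linext S A f]|.

Definition eps (e : rel T) (S : {set T}) : nat :=
  \max_(A : {set T * T} | acyclic_orientation e S A) num_linext S A.

End Graphs.

(* Let A be an acyclic orientation of G attaining eps G, with poset P and e(P)
   linear extensions.  Every linear extension puts some vertex first and some
   vertex last, so e(P) <= sum_v #{f | f v = 1} and e(P) <= sum_v #{f | f v = n}.
   Deleting v from an extension with f v = 1 (or f v = n) gives, injectively, a
   linear extension of the orientation induced by A on V \ v, so each term is at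
   most eps (G \ v).  As G is connected, v has a neighbour, so v is not both
   minimal and maximal in P: one of its two terms vanishes. *)

From mathcomp Require Import all_boot zify.

Set Implicit Arguments. Unset Strict Implicit. Unset Printing Implicit Defensive.

(* [lia] compares atoms syntactically, and the same [f x : nat] can occur with
   convertible but distinct typings of [x]; generalizing the ordinal values first
   identifies these atoms. *)
Ltac ord_lia :=
  rewrite -?subn1;
  repeat match goal with |- context [nat_of_ord ?i] => move: (nat_of_ord i) => ? end;
  lia.

Section LinearExtensions.
Variable T : finType.
Implicit Types (S : {set T}) (A : {set T * T}) (f : {ffun T -> 'I_#|T|.+1}).

Lemma linextE S A f : is_linext S A f ->
  [/\ forall x, x \notin S -> f x = 0 :> nat,
      forall x, x \in S -> 0 < f x <= #|S|,
      forall x y, x \in S -> y \in S -> f x = f y :> nat -> x = y &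
      forall u v, u \in S -> v \in S -> ao_lt A u v -> f u < f v].
Proof.
case/and4P=> /forallP out0 /forall_inP range /forall_inP inj /forall_inP mono.
split=> [x /(implyP (out0 x)) /eqP // | x /range // | x y Sx Sy fxy | u v Su Sv].
- by apply/eqP; apply: (implyP (forall_inP (inj x Sx) y Sy)); apply/eqP/val_inj.
- exact: implyP (forall_inP (mono u Su) v Sv).
Qed.

Lemma linextI S A f :
  (forall x, x \notin S -> f x = 0 :> nat) ->
  (forall x, x \in S -> 0 < f x <= #|S|) ->
  (forall x y, x \in S -> y \in S -> f x = f y :> nat -> x = y) ->
  (forall u v, u \in S -> v \in S -> ao_lt A u v -> f u < f v) ->
  is_linext S A f.
Proof.
move=> out0 range inj mono; apply/and4P; split.
- by apply/forallP=> x; apply/implyP=> /out0 ->.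
- exact/forall_inP.
- apply/forall_inP=> x Sx; apply/forall_inP=> y Sy; apply/implyP=> /eqP fxy.
  by apply/eqP/inj; rewrite ?fxy.
- by apply/forall_inP=> u Su; apply/forall_inP=> v Sv; apply/implyP/mono.
Qed.

Lemma linext_onto A f : is_linext [set: T] A f ->
  forall k, 0 < k <= #|T| -> exists x, f x = k :> nat.
Proof.
case/linextE=> _ range inj _ k k_range.
have im_f : [set f x | x in [set: T]] = [set~ ord0].
  apply/eqP; rewrite eqEcard cardsC1 card_ord card_in_imset; last first.
    by move=> x y _ _ fxy; apply: inj; rewrite ?fxy.
  rewrite cardsT leqnn andbT; apply/subsetP=> _ /imsetP[x _ ->].
  by rewrite !inE; apply/eqP=> fx0; have := range x (in_setT x); rewrite fx0.
have k_ord : k < #|T|.+1 by lia.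
have : inord k \in [set f x | x in [set: T]].
  by rewrite im_f !inE; apply/eqP=> /(congr1 val); rewrite /= (inordK k_ord); lia.
by case/imsetP=> x _ fx; exists x; rewrite -fx inordK.
Qed.

Definition linext_at A v k := [set f | is_linext [set: T] A f & f v == k :> nat].

Lemma sum_card_linext_at A k : 0 < k <= #|T| ->
  num_linext [set: T] A <= \sum_v #|linext_at A v k|.
Proof.
move=> k_range; rewrite /num_linext -sum1dep_card.
under [X in _ <= X]eq_bigr => v _.
  rewrite -(sum1dep_card (fun f => is_linext [set: T] A f && (f v == k :> nat))).
  rewrite big_mkcondr /=; over.
rewrite exchange_big /=; apply: leq_sum => f linf.
have [x fx] := linext_onto linf k_range.
by rewrite (bigD1 x) //= fx eqxx.
Qed.

Lemma linext_at_first_eq0 A v w : ao_lt A w v -> linext_at A v 1 = set0.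
Proof.
move=> wv; apply/setP=> f; rewrite !inE.
apply/negP=> /andP[/linextE[_ range _ mono] /eqP fv].
have := mono w v (in_setT w) (in_setT v) wv; rewrite fv ltnS leqn0 => /eqP fw0.
by have := range w (in_setT w); rewrite fw0.
Qed.

Lemma linext_at_last_eq0 A v w : ao_lt A v w -> linext_at A v #|T| = set0.
Proof.
move=> vw; apply/setP=> f; rewrite !inE.
apply/negP=> /andP[/linextE[_ range _ mono] /eqP fv].
have := mono v w (in_setT v) (in_setT w) vw; rewrite fv ltnNge.
by case/andP: (range w (in_setT w)) => _; rewrite cardsT => ->.
Qed.

End LinearExtensions.

Section VertexDeletion.
Variable T : finType.
Implicit Types (A : {set T * T}) (f : {ffun T -> 'I_#|T|.+1}).

Definition restr_arcs A v : {set T * T} := [set p in A | (p.1 != v) && (p.2 != v)].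

Lemma connect_restr_arcs A v x y :
  connect (arcrel (restr_arcs A v)) x y -> connect (arcrel A) x y.
Proof.
by apply: connect_sub => a b; rewrite /arcrel inE => /andP[ab _]; apply: connect1.
Qed.

Lemma ao_lt_restr_arcs A v x y : ao_lt (restr_arcs A v) x y -> ao_lt A x y.
Proof. by case/andP=> xy /connect_restr_arcs; rewrite /ao_lt xy. Qed.

Lemma acyclic_orientation_restr_arcs e A v :
  acyclic_orientation e [set: T] A ->
  acyclic_orientation e ([set: T] :\ v) (restr_arcs A v).
Proof.
case/andP=> /forallP orA /forallP acA; apply/andP; split.
- apply/forallP=> u; apply/forallP=> w; have /forallP/(_ w) := orA u.
  rewrite !inE /=.
  by case: ((u, w) \in A); case: ((w, u) \in A); case: (u == v); case: (w == v);
     case: (e u w).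
- apply/forallP=> u; apply/forallP=> w; apply/implyP; rewrite inE => /andP[uw _].
  by apply: contra (implyP (forallP (acA u) w) uw); apply: connect_restr_arcs.
Qed.

Lemma card_setTD1 v : #|[set: T] :\ v| = #|T|.-1.
Proof. by have := cardsD1 v [set: T]; rewrite cardsT in_setT; lia. Qed.

Definition drop_first v f : {ffun T -> 'I_#|T|.+1} :=
  [ffun x => inord (if x == v then 0 else (f x).-1)].

Definition drop_last v f : {ffun T -> 'I_#|T|.+1} :=
  [ffun x => if x == v then ord0 else f x].

Lemma drop_firstE v f x : drop_first v f x = (if x == v then 0 else (f x).-1) :> nat.
Proof. by rewrite ffunE inordK //; case: ifP => // _; have := ltn_ord (f x); lia. Qed.

Lemma drop_lastE v f x : drop_last v f x = (if x == v then 0 else f x) :> nat.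
Proof. by rewrite ffunE; case: ifP. Qed.

Lemma card_linext_at_first A v :
  #|linext_at A v 1| <= num_linext ([set: T] :\ v) (restr_arcs A v).
Proof.
rewrite -(card_in_imset (f := drop_first v)); last first.
  move=> f g; rewrite !inE => /andP[/linextE[_ rf _ _] /eqP fv].
  move=> /andP[/linextE[_ rg _ _] /eqP gv] /ffunP fg.
  apply/ffunP=> x; apply: ord_inj; have := congr1 (@nat_of_ord _) (fg x).
  rewrite /= !drop_firstE; case: eqP => [-> _|_]; first by rewrite fv gv.
  by have := rf x (in_setT x); have := rg x (in_setT x); ord_lia.
apply: subset_leq_card; apply/subsetP=> _ /imsetP[f + ->].
rewrite !inE => /andP[linf /eqP fv]; have [_ range inj mono] := linextE linf.
have fx_gt1 x : x != v -> 1 < f x.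
  move=> xv; have := range x (in_setT x); suff: f x != 1 :> nat by ord_lia.
  by apply: contra xv => /eqP fx; apply/eqP/inj; rewrite ?fx ?fv.
apply: linextI => [x | x | x y | u w]; rewrite !inE ?andbT ?negbK !drop_firstE.
- by move=> ->.
- move=> xv; rewrite (negbTE xv) card_setTD1.
  by have := fx_gt1 x xv; have := range x (in_setT x); rewrite cardsT; ord_lia.
- move=> xv yv; rewrite (negbTE xv) (negbTE yv) => fxy; apply: inj => //; move: fxy.
  by have := fx_gt1 x xv; have := fx_gt1 y yv; ord_lia.
- move=> uv wv; rewrite (negbTE uv) (negbTE wv) => /ao_lt_restr_arcs/mono.
  by move=> /(_ (in_setT u) (in_setT w)); have := fx_gt1 u uv; ord_lia.
Qed.

Lemma card_linext_at_last A v :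
  #|linext_at A v #|T| | <= num_linext ([set: T] :\ v) (restr_arcs A v).
Proof.
rewrite -(card_in_imset (f := drop_last v)); last first.
  move=> f g; rewrite !inE => /andP[_ /eqP fv] /andP[_ /eqP gv] /ffunP fg.
  apply/ffunP=> x; apply: ord_inj; have := congr1 (@nat_of_ord _) (fg x).
  by rewrite /= !drop_lastE; case: eqP => [->|//]; rewrite fv gv.
apply: subset_leq_card; apply/subsetP=> _ /imsetP[f + ->].
rewrite !inE => /andP[linf /eqP fv]; have [_ range inj mono] := linextE linf.
have fx_lt x : x != v -> f x < #|T|.
  move=> xv; have := range x (in_setT x); rewrite cardsT.
  suff: f x != #|T| :> nat by ord_lia.
  by apply: contra xv => /eqP fx; apply/eqP/inj; rewrite ?fx ?fv.
apply: linextI => [x | x | x y | u w]; rewrite !inE ?andbT ?negbK !drop_lastE.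
- by move=> ->.
- move=> xv; rewrite (negbTE xv) card_setTD1.
  by have := fx_lt x xv; have := range x (in_setT x); ord_lia.
- by move=> xv yv; rewrite (negbTE xv) (negbTE yv); apply: inj.
- by move=> uv wv; rewrite (negbTE uv) (negbTE wv) => /ao_lt_restr_arcs/mono; apply.
Qed.

End VertexDeletion.

Lemma exists_neighbour (T : finType) (e : rel T) v :
  connected_graph e -> 1 < #|T| -> exists w, e v w.
Proof.
move=> conn T_gt1; have /card_gt0P[u] : 0 < #|predC1 v| by rewrite cardC1; lia.
rewrite !inE => uv; case/connectP: (conn v u) => -[/= _ u_def | w p /= /andP[vw _] _].
  by rewrite u_def eqxx in uv.
by exists w.
Qed.

Lemma card_linext_at_ends_le (T : finType) (e : rel T) A v :
  irreflexive e -> connected_graph e -> 1 < #|T| ->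
  acyclic_orientation e [set: T] A ->
  #|linext_at A v 1| + #|linext_at A v #|T| | <= eps e ([set: T] :\ v).
Proof.
move=> irr conn T_gt1 aoA.
have le_eps : num_linext ([set: T] :\ v) (restr_arcs A v) <= eps e ([set: T] :\ v).
  exact: leq_bigmax_cond (acyclic_orientation_restr_arcs v aoA).
have [w vw] := exists_neighbour v conn T_gt1.
have wv : w != v by apply: contraTneq vw => ->; rewrite irr.
have /andP[/forallP orA _] := aoA.
have arc : ((v, w) \in A) (+) ((w, v) \in A).
  by apply: (implyP (andP (forallP (orA v) w)).2); rewrite !in_setT vw.
have [wvA | /negbTE wvA] := boolP ((w, v) \in A).
- have wv_lt : ao_lt A w v by rewrite /ao_lt wv connect1.
  rewrite (linext_at_first_eq0 wv_lt) cards0.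
  exact: leq_trans (card_linext_at_last A v) le_eps.
- have vwA : (v, w) \in A by rewrite wvA addbF in arc.
  have vw_lt : ao_lt A v w by rewrite /ao_lt eq_sym wv connect1.
  rewrite (linext_at_last_eq0 vw_lt) cards0 addn0.
  exact: leq_trans (card_linext_at_first A v) le_eps.
Qed.

Theorem mainTheorem11 (T : finType) (e : rel T) :
  simple_graph e -> connected_graph e -> 2 <= #|T| ->
  2 * eps e [set: T] <= \sum_(v : T) eps e ([set: T] :\ v).
Proof.
move=> [_ irr] conn T_gt1; rewrite {1}/eps.
have [no_ao | some_ao] := posnP #|[pred A | acyclic_orientation e [set: T] A]|.
  by rewrite [X in _ * X]big_pred0 // => A; exact: card0_eq no_ao A.
have [A aoA ->] := eq_bigmax_cond (num_linext [set: T]) some_ao.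
rewrite mul2n -addnn.
apply: leq_trans (leq_add (sum_card_linext_at A (k := 1) _)
                          (sum_card_linext_at A (k := #|T|) _)) _; try lia.
rewrite -big_split /=; apply: leq_sum => v _.
exact: card_linext_at_ends_le.
Qed.
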